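(* Let $f:[0,1]\to[0,1]$ be a continuous map such that $f$ is increasing on $[0,1/2]$ and decreasing on $[1/2,1]$. Suppose $f$ has a periodic orbit of least period $\ge 2$. Then the periodic orbits of $f$ of least periods $\ge 2$ are nested in the following sense: if $P$ and $Q$ are periodic orbits of $f$ of least periods $\ge 2$ with $\max P<\max Q$, then $[\min P,\max P]\subset[\min Q,\max Q]$.
   Context: For $n\ge1$, $f^n$ denotes the $n$-th iterate of $f$. A point $x_0$ is a periodic point of least period $k$ if $f^k(x_0)=x_0$ and $f^i(x_0)\neq x_0$ for $0<i<k$; its orbit $\{x_0,f(x_0),f^2(x_0),\dots\}$ is then a periodic orbit of least period $k$. *)

From Stdlib Require Import Reals Lra Lia.
Open Scope R_scope.

Definition iter (f : R -> R) (n : nat) (x : R) : R := Nat.iter n f x.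

Definition maps01 (f : R -> R) : Prop :=
  forall x, 0 <= x <= 1 -> 0 <= f x <= 1.

Definition continuous_on01 (f : R -> R) : Prop :=
  forall x, 0 <= x <= 1 -> forall eps, 0 < eps -> exists delta, 0 < delta /\
    forall y, 0 <= y <= 1 -> Rabs (y - x) < delta -> Rabs (f y - f x) < eps.

Definition increasing_on (f : R -> R) (a b : R) : Prop :=
  forall x y, a <= x <= b -> a <= y <= b -> x < y -> f x < f y.

Definition decreasing_on (f : R -> R) (a b : R) : Prop :=
  forall x y, a <= x <= b -> a <= y <= b -> x < y -> f y < f x.

Definition least_period (f : R -> R) (x0 : R) (k : nat) : Prop :=
  (1 <= k)%nat /\ iter f k x0 = x0 /\
  forall i, (0 < i < k)%nat -> iter f i x0 <> x0.

Definition orbit (f : R -> R) (x0 : R) : R -> Prop :=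
  fun y => exists n : nat, y = iter f n x0.

Definition is_min_of (S : R -> Prop) (m : R) : Prop :=
  S m /\ forall y, S y -> m <= y.

Definition is_max_of (S : R -> Prop) (M : R) : Prop :=
  S M /\ forall y, S y -> y <= M.

(** Let [m] and [M] be the minimum and maximum of a periodic orbit of least
    period at least 2.  The point [y] of the orbit with [f y = m] must be [M]:
    if [y <= 1/2] then [m < y] (as [m] is not fixed) and monotonicity gives
    [f m < f y = m], while if [1/2 < y < M] then [f M < f y = m]; either way
    the orbit would leave [[m, M]].  Hence every such orbit has its maximum in
    [(1/2, 1]] and its minimum equal to [f] of its maximum, and since [f] is
    decreasing on [[1/2, 1]], a larger maximum forces a smaller minimum. *)

From Stdlib Require Import Reals Lra Lia.
Open Scope R_scope.

Lemma iter_add (f : R -> R) (a b : nat) (x : R) :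
  iter f (a + b) x = iter f a (iter f b x).
Proof.
  induction a as [|a IHa]; [reflexivity|].
  change (f (iter f (a + b) x) = f (iter f a (iter f b x))).
  rewrite IHa; reflexivity.
Qed.

Lemma iter_mul_period (f : R -> R) (k a : nat) (x : R) :
  iter f k x = x -> iter f (a * k) x = x.
Proof.
  intros Hk; induction a as [|a IHa]; [reflexivity|].
  replace (S a * k)%nat with (k + a * k)%nat by lia.
  rewrite iter_add, IHa; exact Hk.
Qed.

Lemma iter_fixed (f : R -> R) (n : nat) (x : R) :
  f x = x -> iter f n x = x.
Proof.
  intros Hx; induction n as [|n IHn]; [reflexivity|].
  change (f (iter f n x) = x); rewrite IHn; exact Hx.
Qed.

Lemma iter_in01 (f : R -> R) (n : nat) (x : R) :
  maps01 f -> 0 <= x <= 1 -> 0 <= iter f n x <= 1.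
Proof.
  intros Hf Hx; induction n as [|n IHn]; [exact Hx|].
  apply Hf; exact IHn.
Qed.

Lemma orbit_in01 (f : R -> R) (p y : R) :
  maps01 f -> 0 <= p <= 1 -> orbit f p y -> 0 <= y <= 1.
Proof. intros Hf Hp [n ->]; apply iter_in01; assumption. Qed.

Lemma orbit_image (f : R -> R) (p y : R) : orbit f p y -> orbit f p (f y).
Proof. intros [n ->]; exists (S n); reflexivity. Qed.

Section PeriodicOrbit.

Variables (f : R -> R) (p : R) (k : nat).
Hypotheses (Hk : (1 <= k)%nat) (Hperiod : iter f k p = p).

Lemma periodic_orbit_returns (y : R) :
  orbit f p y -> exists j, iter f j y = p.
Proof.
  intros [n ->]; exists (n * (k - 1))%nat.
  rewrite <- iter_add.
  replace (n * (k - 1) + n)%nat with (n * k)%nat by nia.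
  apply iter_mul_period; exact Hperiod.
Qed.

Lemma periodic_orbit_preimage (y : R) :
  orbit f p y -> exists z, orbit f p z /\ f z = y.
Proof.
  intros [n ->]; exists (iter f (k - 1 + n) p); split.
  - exists (k - 1 + n)%nat; reflexivity.
  - change (iter f (S (k - 1 + n)) p = iter f n p).
    replace (S (k - 1 + n)) with (n + k)%nat by lia.
    rewrite iter_add, Hperiod; reflexivity.
Qed.

End PeriodicOrbit.

Lemma least_period_orbit_no_fixed (f : R -> R) (p : R) (k : nat) (y : R) :
  least_period f p k -> (2 <= k)%nat -> orbit f p y -> f y <> y.
Proof.
  intros [Hk [Hperiod Hleast]] Hk2 Hy Hfix.
  destruct (periodic_orbit_returns f p k Hk Hperiod y Hy) as [j Hj].
  rewrite iter_fixed in Hj by exact Hfix; subst y.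
  apply (Hleast 1%nat); [lia | exact Hfix].
Qed.

Section Unimodal.

Variable f : R -> R.
Hypotheses (hmap : maps01 f) (hinc : increasing_on f 0 (1/2))
  (hdec : decreasing_on f (1/2) 1).

Lemma orbit_max_maps_to_min (p : R) (k : nat) (m M : R) :
  0 <= p <= 1 -> least_period f p k -> (2 <= k)%nat ->
  is_min_of (orbit f p) m -> is_max_of (orbit f p) M ->
  f M = m /\ 1/2 < M <= 1.
Proof.
  intros Hp Hper Hk2 [Hm Hmin] [HM Hmax].
  assert (Hm01 : 0 <= m <= 1) by exact (orbit_in01 f p m hmap Hp Hm).
  assert (HM01 : 0 <= M <= 1) by exact (orbit_in01 f p M hmap Hp HM).
  pose proof Hper as [Hk [Hperiod _]].
  destruct (periodic_orbit_preimage f p k Hk Hperiod m Hm) as [y [Hy Hfy]].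
  assert (Hy01 : 0 <= y <= 1) by exact (orbit_in01 f p y hmap Hp Hy).
  assert (Hmy : m <= y) by exact (Hmin y Hy).
  assert (HyM : y <= M) by exact (Hmax y Hy).
  assert (Hfm : m <= f m) by exact (Hmin _ (orbit_image f p m Hm)).
  assert (HfM : m <= f M) by exact (Hmin _ (orbit_image f p M HM)).
  assert (Hm_moves : f m <> m)
    by exact (least_period_orbit_no_fixed f p k m Hper Hk2 Hm).
  destruct (Rle_lt_dec y (1/2)) as [Hyl|Hyr].
  - destruct (Rle_lt_or_eq_dec m y Hmy) as [Hlt|Heq].
    + assert (f m < f y) by (apply hinc; lra). lra.
    + subst y; contradiction.
  - destruct (Rle_lt_or_eq_dec y M HyM) as [Hlt|Heq].
    + assert (f M < f y) by (apply hdec; lra). lra.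
    + subst y; split; [exact Hfy | lra].
Qed.

End Unimodal.

Theorem proposition1 (f : R -> R)
  (hmap : maps01 f)
  (hcont : continuous_on01 f)
  (hinc : increasing_on f 0 (1/2))
  (hdec : decreasing_on f (1/2) 1)
  (hex : exists z k, 0 <= z <= 1 /\ least_period f z k /\ (2 <= k)%nat) :
  forall (p q : R) (k l : nat) (minP maxP minQ maxQ : R),
    0 <= p <= 1 -> least_period f p k -> (2 <= k)%nat ->
    0 <= q <= 1 -> least_period f q l -> (2 <= l)%nat ->
    is_min_of (orbit f p) minP -> is_max_of (orbit f p) maxP ->
    is_min_of (orbit f q) minQ -> is_max_of (orbit f q) maxQ ->
    maxP < maxQ ->
    forall x, minP <= x <= maxP -> minQ <= x <= maxQ.
Proof.
  intros p q k l minP maxP minQ maxQ Hp Hpk Hk Hq Hql Hl HminP HmaxP HminQ HmaxQ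
    Hmax x Hx.
  destruct (orbit_max_maps_to_min f hmap hinc hdec p k minP maxP Hp Hpk Hk
              HminP HmaxP) as [HfP HP].
  destruct (orbit_max_maps_to_min f hmap hinc hdec q l minQ maxQ Hq Hql Hl
              HminQ HmaxQ) as [HfQ HQ].
  assert (f maxQ < f maxP) by (apply hdec; lra).
  lra.
Qed.
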